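(* For any $\mathcal{L}^S$-theory $\Gamma$, $\Gamma+\Sigma+\Sigma_1$ is consistent if and only if $\Gamma+\Sigma^*+\Sigma_1^*$ is consistent.
   Context: $\mathcal{L}$ is a countable first-order language containing a binary symbol $<$; $\mathcal{L}^S$ is $\mathcal{L}$ with Skolem function symbols and $T_{\mathrm{skolem}}$ the theory saying they are Skolem functions; ''term'' means $\mathcal{L}^S$-term. $\lambda$ is a singular cardinal, $\eta=\mathrm{cf}(\lambda)$, $\langle\mu_i;i<\eta\rangle$ increasing cardinals with limit $\lambda$, $C=\{c_{ij}\mid i<\eta,j<\mu_i\}$ and $C^*=\{c_{ij}\mid i,j<\omega\}$ sets of new constants. For a set $D$ of such doubly indexed constants (constants below range over $D$, and in every expression $\tau(c_{m_1n_1},\dots,c_{m_kn_k})$ the constants are strictly increasing lexicographically in the index pairs), define: items (i) $T_{\mathrm{skolem}}$ plus axioms that $<$ is a linear order; (ii) $c_{ij}<c_{kl}$ iff $(i,j)<(k,l)$ lexicographically; (iii) $\tau(c_{i_1j_1},\dots,c_{i_nj_n})<c_{ij}$ whenever $i_1,\dots,i_n<i$. The theory $\Sigma_1$ over $D$ is (i)–(iii) plus: (iv) for $i_n>1$, any $j$, any $u\ge i_n$, any $l_1,\dots,l_{n-q}$: if $\tau(c_{i_1j_1},\dots,c_{i_nj_n})<c_{(i_n-1)j}$ then $\tau(\bar c,c_{i_{q+1}j_{q+1}},\dots,c_{i_nj_n})=\tau(\bar c,c_{ul_1},\dots,c_{ul_{n-q}})$, with $q$ greatest such that $i_q\ne i_n$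 ($q=0$ if none) and $\bar c=\langle c_{i_1j_1},\dots,c_{i_qj_q}\rangle$. The theory $\Sigma$ over $D$ is (i)–(iii) plus: (iv) for any $u<i_n$, any $v$ and any $l_{m+1},\dots,l_n$: if $\tau(c_{i_1j_1},\dots,c_{i_nj_n})<c_{uv}$ then $\tau(\bar c,c_{i_{m+1}j_{m+1}},\dots,c_{i_nj_n})=\tau(\bar c,c_{i_{m+1}l_{m+1}},\dots,c_{i_nl_n})$, with $m$ the smallest integer such that $i_{m+1}>u$ and $\bar c=\langle c_{i_1j_1},\dots,c_{i_mj_m}\rangle$. $\Sigma,\Sigma_1$ denote these theories over $C$; $\Sigma^*,\Sigma_1^*$ denote them over $C^*$. *)

From mathcomp Require Import all_boot.
From Stdlib Require List.
Unset Printing Implicit Defensive.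

(* The countable language L.  Besides the function symbols [fsym] and the    *)
(* relation symbols [rsym] (with arities), L contains the distinguished      *)
(* binary relation symbol <, which is built into the syntax ([Lt]).           *)
(* Constant symbols of L are 0-ary function symbols.                          *)
Record lang := Lang {
  fsym : countType; farity : fsym -> nat;
  rsym : countType; rarity : rsym -> nat }.
Arguments farity {l} _. Arguments rarity {l} _.

(* Syntax of L^S, extended by a type [K] of new constants.  Variables are de  *)
(* Bruijn indices.  [Sk phi n args] is the Skolem function symbol f_{phi,n}  *)
(* (arity n) for the L^S-formula phi(x, y1..yn), where in phi the variable 0 *)
(* is x and the variable k (1 <= k <= n) is y_k.  L^S-formulas are the       *)
(* formulas with K = void (no new constants).                                *)
Section Syntax.
Variable L : lang.
Inductive term (K : Type) : Type :=
| Var : nat -> term K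
| Con : K -> term K
| App : forall f : fsym L, ('I_(farity f) -> term K) -> term K
| Sk : form void -> forall n : nat, ('I_n -> term K) -> term K
with form (K : Type) : Type :=
| Bot : form K
| Eq : term K -> term K -> form K
| Lt : term K -> term K -> form K
| Rel : forall r : rsym L, ('I_(rarity r) -> term K) -> form K
| Imp : form K -> form K -> form K
| All : form K -> form K.
End Syntax.
Arguments Var {L K}. Arguments Con {L K}. Arguments App {L K}. Arguments Sk {L K}.
Arguments Bot {L K}. Arguments Eq {L K}. Arguments Lt {L K}. Arguments Rel {L K}.
Arguments Imp {L K}. Arguments All {L K}.

Fixpoint tvars_lt {L : lang} {K : Type} (k : nat) (t : term L K) : Prop :=
  match t with
  | Var n => (n < k)%N
  | Con _ => True
  | App f a => forall i, tvars_lt k (a i)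
  | Sk _ _ a => forall i, tvars_lt k (a i)
  end.
Fixpoint fvars_lt {L : lang} {K : Type} (k : nat) (phi : form L K) : Prop :=
  match phi with
  | Bot => True
  | Eq t s => tvars_lt k t /\ tvars_lt k s
  | Lt t s => tvars_lt k t /\ tvars_lt k s
  | Rel r a => forall i, tvars_lt k (a i)
  | Imp p q => fvars_lt k p /\ fvars_lt k q
  | All p => fvars_lt k.+1 p
  end.

(* Well-formedness: every Skolem symbol f_{phi,n} occurring is a genuine      *)
(* symbol of L^S, i.e. phi is itself a well-formed L^S-formula whose free     *)
(* variables are among x = 0, y1 = 1, ..., yn = n.                            *)
Fixpoint wf_t {L : lang} {K : Type} (t : term L K) {struct t} : Prop :=
  match t with
  | Var _ => True
  | Con _ => True
  | App f a => forall i, wf_t (a i)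
  | Sk phi n a => wf_f phi /\ fvars_lt n.+1 phi /\ forall i, wf_t (a i)
  end
with wf_f {L : lang} {K : Type} (phi : form L K) {struct phi} : Prop :=
  match phi with
  | Bot => True
  | Eq t s => wf_t t /\ wf_t s
  | Lt t s => wf_t t /\ wf_t s
  | Rel r a => forall i, wf_t (a i)
  | Imp p q => wf_f p /\ wf_f q
  | All p => wf_f p
  end.

Definition LS_sentence {L : lang} (phi : form L void) : Prop :=
  wf_f phi /\ fvars_lt 0 phi.

Record structure (L : lang) := MkStructure {
  dom :> Type;
  dom_inh : dom;
  funI : forall f : fsym L, ('I_(farity f) -> dom) -> dom;
  relI : forall r : rsym L, ('I_(rarity r) -> dom) -> Prop;
  ltM : dom -> dom -> Prop;
  skI : form L void -> forall n : nat, ('I_n -> dom) -> dom }.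
Arguments dom_inh {L} s. Arguments funI {L} s f _. Arguments relI {L} s r _.
Arguments ltM {L} s _ _. Arguments skI {L} s _ n _.

Definition scons {T : Type} (x : T) (rho : nat -> T) (n : nat) : T :=
  if n is n'.+1 then rho n' else x.

Fixpoint teval {L : lang} (M : structure L) {K : Type} (cI : K -> M)
    (rho : nat -> M) (t : term L K) : M :=
  match t with
  | Var n => rho n
  | Con c => cI c
  | App f a => funI M f (fun i => teval M cI rho (a i))
  | Sk phi n a => skI M phi n (fun i => teval M cI rho (a i))
  end.

Fixpoint sat {L : lang} (M : structure L) {K : Type} (cI : K -> M)
    (rho : nat -> M) (phi : form L K) : Prop :=
  match phi with
  | Bot => False
  | Eq t s => teval M cI rho t = teval M cI rho s
  | Lt t s => ltM M (teval M cI rho t) (teval M cI rho s)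
  | Rel r a => relI M r (fun i => teval M cI rho (a i))
  | Imp p q => sat M cI rho p -> sat M cI rho q
  | All p => forall x : M, sat M cI (scons x rho) p
  end.

Definition models {L : lang} (M : structure L) (phi : form L void) : Prop :=
  forall rho : nat -> M, sat M (@of_void M) rho phi.

(* M |= T_skolem: for every L^S-formula phi(x,y1..yn),
   M |= forall y1..yn, (exists x, phi(x,ybar)) -> phi(f_{phi,n}(ybar), ybar).
   (Written out semantically; y_k is the value rho (k-1).) *)
Definition skolem_ok {L : lang} (M : structure L) : Prop :=
  forall (phi : form L void) (n : nat), wf_f phi -> fvars_lt n.+1 phi ->
  forall rho : nat -> M,
    (exists a : M, sat M (@of_void M) (scons a rho) phi) ->
    sat M (@of_void M) (scons (skI M phi n (fun i : 'I_n => rho i)) rho) phi.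

Definition linear_lt {L : lang} (M : structure L) : Prop :=
  (forall x : M, ~ ltM M x x) /\
  (forall x y z : M, ltM M x y -> ltM M y z -> ltM M x z) /\
  (forall x y : M, x = y \/ ltM M x y \/ ltM M y x).

(* Doubly indexed constants c_{ij}: first index in ix1, second in ix2, and   *)
(* c_{ij} exists iff okix i j.                                               *)
Record index_data := IndexData {
  ix1 : Type; lt1 : ix1 -> ix1 -> Prop;
  ix2 : Type; lt2 : ix2 -> ix2 -> Prop;
  okix : ix1 -> ix2 -> Prop }.

Arguments lt1 {i} _ _. Arguments lt2 {i} _ _. Arguments okix {i} _ _.
Definition cst (X : index_data) : Type := {p : ix1 X * ix2 X | okix p.1 p.2}.

Section Sigma.
Variables (L : lang) (X : index_data).

Definition fst_ix (c : cst X) : ix1 X := (sval c).1.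
Definition snd_ix (c : cst X) : ix2 X := (sval c).2.
Definition le1 (a b : ix1 X) : Prop := a = b \/ lt1 a b.

Definition lexlt (c d : cst X) : Prop :=
  lt1 (fst_ix c) (fst_ix d) \/
  (fst_ix c = fst_ix d /\ lt2 (snd_ix c) (snd_ix d)).

Fixpoint lex_incr (cs : seq (cst X)) : Prop :=
  match cs with
  | c :: t => match t with d :: _ => lexlt c d /\ lex_incr t | [::] => True end
  | [::] => True
  end.

Definition admissible (tau : term L void) (cs : seq (cst X)) : Prop :=
  wf_t tau /\ tvars_lt (size cs) tau /\ lex_incr cs.

Definition tval (M : structure L) (cI : cst X -> M)
    (tau : term L void) (cs : seq (cst X)) : M :=
  teval M (@of_void M) (fun r => nth (dom_inh M) (map cI cs) r) tau.

Variables (M : structure L) (cI : cst X -> M).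

Definition sigma_ii : Prop :=
  forall c d : cst X, ltM M (cI c) (cI d) <-> lexlt c d.

Definition sigma_iii : Prop :=
  forall (tau : term L void) (cs : seq (cst X)) (c : cst X),
    admissible tau cs ->
    (forall d, List.In d cs -> lt1 (fst_ix d) (fst_ix c)) ->
    ltM M (tval M cI tau cs) (cI c).

(* item (iv) of Sigma.  cs = pre ++ p :: post, where m = size pre is the
   smallest integer with i_{m+1} > u (p is the (m+1)-th constant);
   d = c_{uv}; post' = c_{i_{m+1} l_{m+1}}, ..., c_{i_n l_n}. *)
Definition sigma_iv : Prop :=
  forall (tau : term L void) (pre post post' : seq (cst X)) (p d : cst X),
    admissible tau (pre ++ p :: post) ->
    (forall c, List.In c pre -> le1 (fst_ix c) (fst_ix d)) ->
    lt1 (fst_ix d) (fst_ix p) ->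
    map fst_ix post' = map fst_ix (p :: post) ->
    lex_incr (pre ++ post') ->
    ltM M (tval M cI tau (pre ++ p :: post)) (cI d) ->
    tval M cI tau (pre ++ p :: post) = tval M cI tau (pre ++ post').

Definition pred_ix (a b : ix1 X) : Prop :=
  lt1 a b /\ forall k, ~ (lt1 a k /\ lt1 k b).

(* item (iv) of Sigma_1.  cs = pre ++ p :: post, where q = size pre is the
   greatest integer with i_q <> i_n (all of p :: post have first index i_n);
   d = c_{(i_n - 1) j}; post' = c_{u l_1}, ..., c_{u l_{n-q}}.
   "i_n > 1" together with "i_n - 1 exists": fst_ix d is the immediate
   predecessor of i_n and fst_ix d is not the least index. *)
Definition sigma1_iv : Prop :=
  forall (tau : term L void) (pre post post' : seq (cst X)) (p d : cst X)
         (u : ix1 X),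
    admissible tau (pre ++ p :: post) ->
    (forall c, List.In c post -> fst_ix c = fst_ix p) ->
    (forall c, List.In c pre -> fst_ix c <> fst_ix p) ->
    pred_ix (fst_ix d) (fst_ix p) ->
    (exists a, lt1 a (fst_ix d)) ->
    le1 (fst_ix p) u ->
    size post' = size (p :: post) ->
    (forall c, List.In c post' -> fst_ix c = u) ->
    lex_incr (pre ++ post') ->
    ltM M (tval M cI tau (pre ++ p :: post)) (cI d) ->
    tval M cI tau (pre ++ p :: post) = tval M cI tau (pre ++ post').

End Sigma.
Arguments fst_ix {X} c. Arguments snd_ix {X} c. Arguments le1 {X} a b.
Arguments lexlt {X} c d. Arguments lex_incr {X} cs.
Arguments admissible {L X} tau cs. Arguments tval {L X} M cI tau cs.
Arguments sigma_ii {L X} M cI. Arguments sigma_iii {L X} M cI.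
Arguments sigma_iv {L X} M cI. Arguments pred_ix {X} a b.
Arguments sigma1_iv {L X} M cI.

Definition consistent_with_Sigmas {L : lang} (X : index_data)
    (Gamma : form L void -> Prop) : Prop :=
  exists (M : structure L) (cI : cst X -> M),
    (forall phi, Gamma phi -> models M phi) /\
    skolem_ok M /\ linear_lt M /\
    sigma_ii M cI /\ sigma_iii M cI /\
    sigma_iv M cI /\ sigma1_iv M cI.

(* Ordinals and cardinals.  An ordinal is represented by a type with a       *)
(* strict well-order; a cardinal is an initial ordinal.                      *)
Definition strict_wellorder {T : Type} (lt : T -> T -> Prop) : Prop :=
  (forall x, ~ lt x x) /\
  (forall x y z, lt x y -> lt y z -> lt x z) /\
  (forall x y, x = y \/ lt x y \/ lt y x) /\
  well_founded lt.

Definition initial_below {T : Type} (lt : T -> T -> Prop) (x : T) : Prop :=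
  forall y, lt y x ->
    ~ exists f : {z | lt z x} -> {z | lt z y}, bijective f.

Definition initial_whole {T : Type} (lt : T -> T -> Prop) : Prop :=
  forall y, ~ exists f : T -> {z | lt z y}, bijective f.

Definition strictly_incr {A B : Type} (ltA : A -> A -> Prop)
    (ltB : B -> B -> Prop) (g : A -> B) : Prop :=
  forall a a', ltA a a' -> ltB (g a) (g a').

(* The standing data: lambda (the ordinal type Lam) is a singular cardinal,
   eta (the ordinal type I) is cf(lambda), and mu : I -> Lam is an increasing
   sequence of cardinals mu_i < lambda with limit lambda. *)
Definition singular_setup {Lam : Type} (ltL : Lam -> Lam -> Prop)
    {I : Type} (ltI : I -> I -> Prop) (mu : I -> Lam) : Prop :=
  [/\ strict_wellorder ltL,
      initial_whole ltL,
      (exists f : nat -> Lam, injective f),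
      strict_wellorder ltI &
  [/\ strictly_incr ltI ltL mu,
      (forall i, initial_below ltL (mu i)),
      (forall x : Lam, exists i, ltL x (mu i)),
      (* eta = cf(lambda): eta is <= the order type of every cofinal subset *)
      (forall S : Lam -> Prop,
         (forall x, exists y, S y /\ (x = y \/ ltL x y)) ->
         exists g : I -> Lam, (forall i, S (g i)) /\ strictly_incr ltI ltL g) &
      (* singular: cf(lambda) < lambda *)
      (exists x : Lam, exists g : I -> Lam,
         (forall i, ltL (g i) x) /\ strictly_incr ltI ltL g)]].

Definition C_data {Lam : Type} (ltL : Lam -> Lam -> Prop)
    {I : Type} (ltI : I -> I -> Prop) (mu : I -> Lam) : index_data :=
  @IndexData I ltI Lam ltL (fun i j => ltL j (mu i)).

Definition Cstar_data : index_data :=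
  @IndexData nat (fun a b => (a < b)%N) nat (fun a b => (a < b)%N)
    (fun _ _ => True).

From Pilot Require Import Defs.
From mathcomp Require Import all_boot.
From mathcomp Require Import boolp classical_sets filter.
From Stdlib Require List.
Unset Printing Implicit Defensive.

(* A model transfers along any embedding of constants that preserves the
   lexicographic order and, on first indices, the order, immediate predecessors
   and non-minimality: items (ii)-(iv) of Sigma and Sigma_1 simply pull back.
   From C to C*: take first indices i_0 < i_1 < ..., each the successor of the
   previous one, and second indices g(i_0) < g(i_1) < ... where g is an increasing
   eta-sequence bounded below mu_(i_0); such a g exists because lambda is singular,
   so every c_(i_n, g(i_m)) is a constant of C.
   From C* to C: each finite set s of constants of C embeds into C* by ranking its
   indices.  Interpret c in an ultrapower of the C*-model over the finite sets, by
   an ultrafilter containing every {s | s0 is a subset of s}, as the class of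
   s |-> c_(rank_emb s c); by Los's theorem it inherits Gamma, the Skolem axioms,
   linearity, and items (ii)-(iv), each of which involves finitely many constants. *)

Definition strict_total_order {T : Type} (lt : T -> T -> Prop) : Prop :=
  [/\ forall a, ~ lt a a,
      forall a b c, lt a b -> lt b c -> lt a c &
      forall a b, a = b \/ lt a b \/ lt b a].

Lemma wellorder_total {T : Type} {lt : T -> T -> Prop} :
  strict_wellorder lt -> strict_total_order lt.
Proof. by case=> [irr [trans [total _]]]. Qed.

Lemma well_founded_minimal {A : Type} {R : A -> A -> Prop} : well_founded R ->
  forall P : A -> Prop, (exists a, P a) -> exists a, P a /\ forall b, P b -> ~ R b a.
Proof.
move=> R_wf P [a Pa]; apply: contrapT => no_min.
elim/(well_founded_ind R_wf): a Pa => a IH Pa; apply: no_min.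
by exists a; split=> // b Pb /IH; apply.
Qed.

Section StrictMono.
Variables (T : Type) (lt : T -> T -> Prop).
Hypothesis lt_order : strict_total_order lt.

Lemma chain_lt (f : nat -> T) : (forall n, lt (f n) (f n.+1)) ->
  forall n m, (n < m)%N -> lt (f n) (f m).
Proof.
have [_ lt_trans _] := lt_order; move=> lt_succ n; elim=> // m IH.
rewrite ltnS leq_eqVlt => /orP [/eqP -> //|/IH lt_nm].
exact: lt_trans _ _ _ lt_nm (lt_succ m).
Qed.

Variable f : nat -> T.
Hypothesis f_mono : forall n m, (n < m)%N -> lt (f n) (f m).

Lemma strict_mono_lt n m : lt (f n) (f m) -> (n < m)%N.
Proof.
have [lt_irr lt_trans _] := lt_order; move=> lt_nm.
case: (ltngtP n m) => // [lt_mn|eq_mn].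
  by case: (lt_irr (f n)); apply: lt_trans _ _ _ lt_nm (f_mono _ _ lt_mn).
by move: lt_nm; rewrite eq_mn => /lt_irr.
Qed.

Lemma strict_mono_inj : injective f.
Proof.
have [lt_irr _ _] := lt_order; move=> n m eq_f.
by case: (ltngtP n m) => // /f_mono; rewrite eq_f => /lt_irr.
Qed.

End StrictMono.
Arguments chain_lt {T lt} lt_order {f}.
Arguments strict_mono_lt {T lt} lt_order {f} f_mono {n m}.
Arguments strict_mono_inj {T lt} lt_order {f} f_mono.

Lemma In_mem (T : eqType) (s : seq T) x : List.In x s -> x \in s.
Proof. by elim: s => //= y s IH [->|/IH xs]; rewrite in_cons ?eqxx ?xs ?orbT. Qed.

Section Rank.
Variables (A : Type) (lt : A -> A -> Prop).
Hypothesis lt_order : strict_total_order lt.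
Let lt_irr : forall a, ~ lt a a. Proof. by case: lt_order. Qed.
Let lt_trans : forall a b c, lt a b -> lt b c -> lt a c. Proof. by case: lt_order. Qed.
Let lt_total : forall a b, a = b \/ lt a b \/ lt b a. Proof. by case: lt_order. Qed.

Let below (a : A) : pred {classic A} := fun x => `[< lt x a >].
Let distinct (s : seq A) : seq {classic A} := undup (s : seq {classic A}).

Definition rank (s : seq A) (a : A) : nat := count (below a) (distinct s).

Lemma count_below_or_eq s a : List.In a s ->
  count (predU (below a) (pred1 (a : {classic A}))) (distinct s) = (rank s a).+1.
Proof.
move=> a_s; set both := predI (below a) (pred1 (a : {classic A})).
have none_both : count both (distinct s) = 0.
  apply/eqP; rewrite eqn0Ngt -has_count; apply/hasPn => x _ /=.
  by apply/negP => /andP [/asboolP + /eqP xa]; rewrite xa; apply: lt_irr.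
apply/eqP; rewrite -(eqn_add2r (count both (distinct s))) count_predUI none_both.
by rewrite count_uniq_mem ?undup_uniq // mem_undup In_mem // addn0 addn1.
Qed.

Lemma rank_lt {s a b} : List.In a s -> lt a b -> (rank s a < rank s b)%N.
Proof.
move=> a_s lt_ab; rewrite -count_below_or_eq //; apply: sub_count => x /=.
case/orP=> [/asboolP lt_xa|/eqP ->]; apply/asboolP => //; exact: lt_trans lt_ab.
Qed.

Lemma rank_lt_reflect s a b : List.In a s -> List.In b s ->
  (rank s a < rank s b)%N -> lt a b.
Proof.
move=> a_s b_s; case: (lt_total a b) => [->|[//|/(rank_lt b_s)]]; first by rewrite ltnn.
by move=> lt_ba /(ltn_trans lt_ba); rewrite ltnn.
Qed.

Lemma rank_inj s a b : List.In a s -> List.In b s -> rank s a = rank s b -> a = b.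
Proof.
move=> a_s b_s eq_ab; case: (lt_total a b) => [//|[/(rank_lt a_s)|/(rank_lt b_s)]];
  by rewrite eq_ab ltnn.
Qed.

Lemma rank_succ s a b : List.In a s -> lt a b -> (forall x, ~ (lt a x /\ lt x b)) ->
  rank s b = (rank s a).+1.
Proof.
move=> a_s lt_ab gap; rewrite -count_below_or_eq //; apply: eq_count => x /=.
apply/asboolP/orP => [lt_xb|[/asboolP lt_xa|/eqP ->] //]; last exact: lt_trans lt_ab.
case: (lt_total x a) => [->|[lt_xa|lt_ax]]; first by right.
  by left; apply/asboolP.
by case: (gap x).
Qed.

End Rank.
Arguments rank {A} lt s a.
Arguments rank_lt {A lt} lt_order {s a b}.
Arguments rank_lt_reflect {A lt} lt_order {s a b}.
Arguments rank_inj {A lt} lt_order {s a b}.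
Arguments rank_succ {A lt} lt_order {s a b}.

Section Ultrapower.
Variables (L : lang) (M : structure L) (T : Type) (U : set_system T).
Context {UF : UltraFilter U}.

Definition ueq (f g : T -> M) : Prop := U (fun s => f s = g s).

Lemma ueq_refl f : ueq f f.
Proof. exact: filterE. Qed.

Lemma ueq_trans f g h : ueq f g -> ueq g h -> ueq f h.
Proof. by move=> fg gh; apply: (filterS2 _ _ fg gh) => s -> ->. Qed.

Lemma ueq_sym f g : ueq f g -> ueq g f.
Proof. by apply: filterS => s ->. Qed.

(* The class of f in M^T/U is represented by the predicate [ueq f]. *)
Definition uprod : Type := {P : (T -> M) -> Prop | exists f, P = ueq f}.
Definition ucls (f : T -> M) : uprod := exist _ (ueq f) (ex_intro _ f erefl).
Definition urep (x : uprod) : T -> M := sval (cid (svalP x)).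

Lemma urepK x : ucls (urep x) = x.
Proof.
case: x => P eP; apply: eq_exist; rewrite /urep /=.
by case: cid => f /= /esym.
Qed.

Lemma ucls_eq f g : ucls f = ucls g <-> ueq f g.
Proof.
split=> [/(congr1 sval) /= -> | fg]; first exact: ueq_refl.
apply: eq_exist; apply: funext => h; apply: propext.
by split; apply: ueq_trans; [apply: ueq_sym|].
Qed.

Lemma urep_ucls f : ueq (urep (ucls f)) f.
Proof. by apply/ucls_eq; rewrite urepK. Qed.

Lemma urep_family {n} {a : 'I_n -> uprod} {g : 'I_n -> T -> M} :
  (forall i, a i = ucls (g i)) ->
  U (fun s => (fun i => urep (a i) s) = (fun i => g i s)).
Proof.
move=> ag; apply: filterS (filter_forall _ (fun i => urep_ucls (g i))) => s eq_g.
by apply: funext => i; rewrite ag eq_g.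
Qed.

Definition ultrapower : structure L :=
  @MkStructure L uprod (ucls (fun=> dom_inh M))
    (fun f a => ucls (fun s => funI M f (fun i => urep (a i) s)))
    (fun r a => U (fun s => relI M r (fun i => urep (a i) s)))
    (fun x y => U (fun s => ltM M (urep x s) (urep y s)))
    (fun phi n a => ucls (fun s => skI M phi n (fun i => urep (a i) s))).

Lemma ltM_ucls f g :
  ltM ultrapower (ucls f) (ucls g) <-> U (fun s => ltM M (f s) (g s)).
Proof.
have [rf rg] := (urep_ucls f, urep_ucls g).
by split; apply: (filterS3 _ _ rf rg) => s -> ->.
Qed.

Lemma los_term {K} (t : term L K) {cI : K -> ultrapower} {cIs : T -> K -> M}
    {rho : nat -> ultrapower} {rhos : T -> nat -> M} :
  (forall k, cI k = ucls (fun s => cIs s k)) ->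
  (forall n, rho n = ucls (fun s => rhos s n)) ->
  teval ultrapower cI rho t = ucls (fun s => teval M (cIs s) (rhos s) t).
Proof.
move=> cIE rhoE; move: K t cI cIs cIE.
apply: term_ind => [K n|K k|K f a IH|K phi n a IH] cI cIs cIE /=;
  [exact: rhoE|exact: cIE|..]; apply/ucls_eq;
  by apply: filterS (urep_family (fun i => IH i cI cIs cIE)) => s ->.
Qed.

Lemma scons_ucls (xs : T -> M) {x : ultrapower} {rho rhos} :
  x = ucls xs -> (forall n, rho n = ucls (fun s => rhos s n)) ->
  forall n, scons x rho n = ucls (fun s => scons (xs s) (rhos s) n).
Proof. by move=> -> rhoE [|n] /=. Qed.

Lemma los_form {K} (phi : form L K) {cI : K -> ultrapower} {cIs : T -> K -> M}
    {rho : nat -> ultrapower} {rhos : T -> nat -> M} :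
  (forall k, cI k = ucls (fun s => cIs s k)) ->
  (forall n, rho n = ucls (fun s => rhos s n)) ->
  sat ultrapower cI rho phi <-> U (fun s => sat M (cIs s) (rhos s) phi).
Proof.
move=> cIE; move: K phi cI cIs cIE rho rhos.
apply: form_ind => [K|K t1 t2|K t1 t2|K r a|K p IHp q IHq|K p IHp]
  cI cIs cIE rho rhos rhoE /=.
- by split=> // /filter_const.
- by rewrite !(los_term _ cIE rhoE); exact: ucls_eq.
- by rewrite !(los_term _ cIE rhoE); exact: ltM_ucls.
- have eq_args := urep_family (fun i => los_term (a i) cIE rhoE).
  by split; apply: (filterS2 _ _ eq_args) => s ->.
- rewrite (IHp _ _ cIE _ _ rhoE) (IHq _ _ cIE _ _ rhoE).
  split=> [pq|]; last exact: filter_app.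
  case: (in_ultra_setVsetC (fun s => sat M (cIs s) (rhos s) p) UF) => [Up|Unp].
    by apply: filterS (pq Up) => s.
  by apply: filterS Unp => s np /np.
- split=> [all_p|Uall_p x].
  have drinker s : exists y0, sat M (cIs s) (scons y0 (rhos s)) p ->
      forall y, sat M (cIs s) (scons y (rhos s)) p.
    have [[y ny]|all_sat] := pselect (exists y, ~ sat M (cIs s) (scons y (rhos s)) p).
      by exists y.
    by exists (dom_inh M) => _ y; apply: contrapT => ny; apply: all_sat; exists y.
  have [ys ys_spec] := choice drinker.
  have := (IHp _ _ cIE _ _ (scons_ucls ys erefl rhoE)).1 (all_p (ucls ys)).
  by apply: filterS => s /ys_spec.
  apply/(IHp _ _ cIE _ _ (scons_ucls _ (esym (urepK x)) rhoE)).
  by apply: filterS Uall_p => s; apply.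
Qed.

Lemma ultra_or (A B : set T) : U (fun s => A s \/ B s) -> U A \/ U B.
Proof.
move=> UAB; case: (in_ultra_setVsetC A UF) => [|UnA]; [by left | right].
by apply: (filterS2 _ _ UAB UnA) => s [].
Qed.

Lemma los_sentence (phi : form L void) (rho : nat -> ultrapower) :
  sat ultrapower (@of_void _) rho phi <->
  U (fun s => sat M (@of_void M) (fun n => urep (rho n) s) phi).
Proof. by apply: los_form => [[]|n]; rewrite urepK. Qed.

Lemma ultrapower_models phi : models M phi -> models ultrapower phi.
Proof. by move=> Mphi rho; apply/los_sentence; apply: filterE => s; apply: Mphi. Qed.

Lemma ultrapower_skolem : skolem_ok M -> skolem_ok ultrapower.
Proof.
move=> skM phi n wf_phi fv_phi rho [a sat_a].
have rhoE k : rho k = ucls (fun s => urep (rho k) s) by rewrite urepK.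
have cIE : forall k : void, of_void _ k = ucls (fun s => of_void M k) by case.
move/(los_form _ cIE (scons_ucls _ (esym (urepK a)) rhoE)): sat_a => Ua.
apply/(los_form _ cIE
  (scons_ucls (fun s => skI M phi n (fun i => urep (rho i) s)) erefl rhoE)).
by apply: filterS Ua => s sat_s; apply: skM => //; exists (urep a s).
Qed.

Lemma ultrapower_linear : linear_lt M -> linear_lt ultrapower.
Proof.
move=> [irr [trans total]]; split; [|split].
- by move=> x ltxx; apply: (@filter_const _ U); apply: filterS ltxx => s /irr.
- by move=> x y z lxy lyz; apply: (filterS2 _ _ lxy lyz) => s; apply: trans.
- move=> x y; have : U (fun s => urep x s = urep y s \/
      ltM M (urep x s) (urep y s) \/ ltM M (urep y s) (urep x s)).
    by apply: filterE => s; apply: total.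
  case/ultra_or=> [exy|/ultra_or lt_xy]; last by right.
  by left; rewrite -(urepK x) -(urepK y); apply/ucls_eq.
Qed.

Lemma tval_ucls {X : index_data} (cIs : T -> cst X -> M) tau cs :
  Defs.tval ultrapower (fun c => ucls (fun s => cIs s c)) tau cs =
  ucls (fun s => Defs.tval M (cIs s) tau cs).
Proof.
apply: los_term => [[]|n]; by elim: cs n => [|c cs IH] [|n] //=.
Qed.
End Ultrapower.
Arguments ultrapower {L} M {T} U.
Arguments ucls {L M T U} f.
Arguments ltM_ucls {L M T U UF} f g.
Arguments ucls_eq {L M T U UF} f g.
Arguments tval_ucls {L M T U UF X} cIs tau cs.
Arguments ultrapower_models {L M T U UF} phi.
Arguments ultrapower_skolem {L M T U UF}.
Arguments ultrapower_linear {L M T U UF}.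

Section Transfer.
Variables (L : lang) (X Y : index_data) (M : structure L) (cI : cst X -> M).
Variables (h : cst Y -> cst X) (f1 : ix1 Y -> ix1 X) (D : cst Y -> Prop).
Hypotheses
  (lex_h : forall c d, D c -> D d -> lexlt (h c) (h d) <-> lexlt c d)
  (fst_h : forall c, D c -> fst_ix (h c) = f1 (fst_ix c))
  (lt_f1 : forall c d, D c -> D d ->
     lt1 (fst_ix c) (fst_ix d) -> lt1 (f1 (fst_ix c)) (f1 (fst_ix d))).

Let cJ (c : cst Y) : M := cI (h c).

Lemma forall_in_map_h (P : cst X -> Prop) l : List.Forall D l ->
  (forall c, D c -> List.In c l -> P (h c)) ->
  forall x, List.In x (map h l) -> P x.
Proof.
move=> /List.Forall_forall Dl Ph x /List.in_map_iff [c [<- cl]].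
exact: Ph (Dl c cl) cl.
Qed.

Lemma lex_incr_map {cs} : lex_incr cs -> List.Forall D cs -> lex_incr (map h cs).
Proof.
elim: cs => [|c [|d cs] IH] // [lt_cd inc] /List.Forall_cons_iff [Dc Ddcs].
split; last exact: IH.
by apply/lex_h => //; case/List.Forall_cons_iff: Ddcs.
Qed.

Lemma admissible_map {tau : term L void} {cs} :
  admissible tau cs -> List.Forall D cs -> admissible tau (map h cs).
Proof.
move=> [wf_tau [vars_tau inc]] Dcs; split=> //; rewrite size_map.
by split=> //; apply: lex_incr_map.
Qed.

Lemma map_fst_h cs : List.Forall D cs ->
  map fst_ix (map h cs) = map f1 (map fst_ix cs).
Proof. by move=> Dcs; elim: Dcs => //= c {}cs Dc _ ->; rewrite fst_h. Qed.

Lemma tval_map (tau : term L void) cs :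
  Defs.tval M cJ tau cs = Defs.tval M cI tau (map h cs).
Proof. by rewrite /Defs.tval -map_comp. Qed.

Lemma sigma_ii_map : sigma_ii M cI ->
  forall c d, D c -> D d -> ltM M (cJ c) (cJ d) <-> lexlt c d.
Proof. by move=> Hii c d Dc Dd; rewrite /cJ Hii; apply: lex_h. Qed.

Lemma sigma_iii_map : sigma_iii M cI ->
  forall tau cs c, List.Forall D (c :: cs) -> admissible tau cs ->
  (forall d, List.In d cs -> lt1 (fst_ix d) (fst_ix c)) ->
  ltM M (Defs.tval M cJ tau cs) (cJ c).
Proof.
move=> Hiii tau cs c /List.Forall_cons_iff [Dc Dcs] adm lt_c.
rewrite tval_map; apply: Hiii; first exact: admissible_map.
apply: forall_in_map_h => // d Dd d_cs.
by rewrite !fst_h //; apply: lt_f1 => //; apply: lt_c.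
Qed.

Lemma sigma_iv_map : sigma_iv M cI ->
  forall tau pre post post' p d,
  List.Forall D (d :: pre ++ p :: post ++ post') ->
  admissible tau (pre ++ p :: post) ->
  (forall c, List.In c pre -> le1 (fst_ix c) (fst_ix d)) ->
  lt1 (fst_ix d) (fst_ix p) ->
  map fst_ix post' = map fst_ix (p :: post) ->
  lex_incr (pre ++ post') ->
  ltM M (Defs.tval M cJ tau (pre ++ p :: post)) (cJ d) ->
  Defs.tval M cJ tau (pre ++ p :: post) = Defs.tval M cJ tau (pre ++ post').
Proof.
move=> Hiv tau pre post post' p d.
case/List.Forall_cons_iff=> Dd /List.Forall_app [Dpre].
case/List.Forall_cons_iff=> Dp /List.Forall_app [Dpost Dpost'].
have Dppost : List.Forall D (p :: post) by constructor.
move=> adm le_pre lt_dp fst_post' inc' lt_d.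
rewrite !tval_map !map_cat /=.
apply: (Hiv tau (map h pre) (map h post) (map h post') (h p) (h d)).
- rewrite -[h p :: _]/(map h (p :: post)) -map_cat.
  by apply: (admissible_map adm); apply/List.Forall_app.
- apply: forall_in_map_h => // c Dc c_pre; rewrite !fst_h //.
  by case: (le_pre c c_pre) => [->|lt_cd]; [left | right; apply: lt_f1].
- by rewrite !fst_h //; apply: lt_f1.
- by rewrite -[h p :: _]/(map h (p :: post)) !map_fst_h // fst_post'.
- by rewrite -map_cat; apply: (lex_incr_map inc'); apply/List.Forall_app.
- by move: lt_d; rewrite tval_map map_cat.
Qed.

Hypotheses
  (inj_f1 : forall c d, D c -> D d ->
     f1 (fst_ix c) = f1 (fst_ix d) -> fst_ix c = fst_ix d)
  (pred_f1 : forall c d, D c -> D d ->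
     pred_ix (fst_ix c) (fst_ix d) -> pred_ix (f1 (fst_ix c)) (f1 (fst_ix d)))
  (nonmin_f1 : forall c, D c ->
     (exists a, lt1 a (fst_ix c)) -> exists a, lt1 a (f1 (fst_ix c))).

Lemma sigma1_iv_map : sigma1_iv M cI ->
  forall tau pre post post' p d u,
  List.Forall D (d :: pre ++ p :: post ++ post') ->
  admissible tau (pre ++ p :: post) ->
  (forall c, List.In c post -> fst_ix c = fst_ix p) ->
  (forall c, List.In c pre -> fst_ix c <> fst_ix p) ->
  pred_ix (fst_ix d) (fst_ix p) ->
  (exists a, lt1 a (fst_ix d)) ->
  le1 (fst_ix p) u ->
  size post' = size (p :: post) ->
  (forall c, List.In c post' -> fst_ix c = u) ->
  lex_incr (pre ++ post') ->
  ltM M (Defs.tval M cJ tau (pre ++ p :: post)) (cJ d) ->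
  Defs.tval M cJ tau (pre ++ p :: post) = Defs.tval M cJ tau (pre ++ post').
Proof.
move=> H1iv tau pre post post' p d u.
case/List.Forall_cons_iff=> Dd /List.Forall_app [Dpre].
case/List.Forall_cons_iff=> Dp /List.Forall_app [Dpost Dpost'].
have Dppost : List.Forall D (p :: post) by constructor.
move=> adm fst_post ne_pre pred_dp nonmin_d le_pu size' fst_post' inc' lt_d.
have [c0 c0_post'] : exists c0, List.In c0 post'.
  by case: post' size' {fst_post' inc' Dpost'} => // c0 l _; exists c0; left.
have Dc0 : D c0 by move/List.Forall_forall: Dpost'; apply.
rewrite !tval_map !map_cat /=.
apply: (H1iv tau (map h pre) (map h post) (map h post') (h p) (h d) (f1 u)).
- rewrite -[h p :: _]/(map h (p :: post)) -map_cat.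
  by apply: (admissible_map adm); apply/List.Forall_app.
- by apply: forall_in_map_h => // c Dc c_post; rewrite !fst_h // fst_post.
- apply: forall_in_map_h => // c Dc c_pre; rewrite !fst_h // => /(inj_f1 _ _ Dc Dp).
  exact: ne_pre.
- by rewrite !fst_h //; apply: pred_f1.
- by rewrite fst_h //; apply: nonmin_f1.
- rewrite fst_h //; move: le_pu; rewrite -(fst_post' c0 c0_post').
  by case=> [->|lt_pu]; [left | right; apply: lt_f1].
- by rewrite /= !size_map.
- by apply: forall_in_map_h => // c Dc c_post'; rewrite fst_h // fst_post'.
- by rewrite -map_cat; apply: (lex_incr_map inc'); apply/List.Forall_app.
- by move: lt_d; rewrite tval_map map_cat.
Qed.

End Transfer.
Arguments sigma_ii_map {L X Y M cI h D} lex_h.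
Arguments sigma_iii_map {L X Y M cI h f1 D} lex_h fst_h lt_f1.
Arguments sigma_iv_map {L X Y M cI h f1 D} lex_h fst_h lt_f1.
Arguments sigma1_iv_map {L X Y M cI h f1 D} lex_h fst_h lt_f1 inj_f1 pred_f1 nonmin_f1.

Lemma ultrafilter_cones (A : Type) :
  exists U : set_system (seq A), UltraFilter U /\ forall F0, U (List.incl F0).
Proof.
have cones_filter : Filter (filter_from setT (@List.incl A)).
  apply: filter_fromT_filter; first by exists [::].
  by move=> F0 F1; exists (F0 ++ F1) => s /List.incl_app_inv.
have cones_proper : ProperFilter (filter_from setT (@List.incl A)).
  by apply: filter_from_proper => F0 _; exists F0; apply: List.incl_refl.
have [U [UU sub_U]] := ultraFilterLemma cones_proper.
by exists U; split=> // F0; apply: sub_U; exists F0.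
Qed.

Lemma pred_ix_Cstar n m : pred_ix (X := Cstar_data) n m <-> m = n.+1.
Proof.
split=> [[/= lt_nm gap]|->].
  apply/eqP; rewrite eqn_leq lt_nm andbT.
  by case: leqP => // lt_Sn_m; case: (gap n.+1).
split=> [|k /= [lt_k /ltnSE le_k]]; first exact: ltnSn.
by move: (leq_trans lt_k le_k); rewrite ltnn.
Qed.

Section RankEmbedding.
Variable X : index_data.
Hypotheses (lt1_order : strict_total_order (@lt1 X))
  (lt2_order : strict_total_order (@lt2 X)).
Variable s : seq (cst X).

(* Ranks of first indices start at 1, so that no image is the least index of omega. *)
Definition rank1 (i : ix1 X) : nat := (rank lt1 (map fst_ix s) i).+1.

Definition rank_emb (c : cst X) : cst Cstar_data :=
  exist _ (rank1 (fst_ix c), rank lt2 (map snd_ix s) (snd_ix c)) Logic.I.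

Lemma rank1_lt c d : List.In c s -> List.In d s ->
  lt1 (fst_ix c) (fst_ix d) -> (rank1 (fst_ix c) < rank1 (fst_ix d))%N.
Proof. by move=> c_s _; rewrite ltnS; apply/(rank_lt lt1_order)/List.in_map. Qed.

Lemma rank1_inj c d : List.In c s -> List.In d s ->
  rank1 (fst_ix c) = rank1 (fst_ix d) -> fst_ix c = fst_ix d.
Proof. by move=> c_s d_s [] /(rank_inj lt1_order); apply; apply: List.in_map. Qed.

Lemma rank1_pred c d : List.In c s -> List.In d s ->
  pred_ix (fst_ix c) (fst_ix d) ->
  pred_ix (X := Cstar_data) (rank1 (fst_ix c)) (rank1 (fst_ix d)).
Proof.
move=> c_s _ [lt_cd gap]; apply/pred_ix_Cstar.
by rewrite /rank1 (rank_succ lt1_order (List.in_map _ _ _ c_s) lt_cd gap).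
Qed.

Lemma rank_emb_lex c d : List.In c s -> List.In d s ->
  lexlt (rank_emb c) (rank_emb d) <-> lexlt c d.
Proof.
move=> c_s d_s; rewrite /lexlt /=.
have [fst_cs fst_ds] := (List.in_map fst_ix _ _ c_s, List.in_map fst_ix _ _ d_s).
have [snd_cs snd_ds] := (List.in_map snd_ix _ _ c_s, List.in_map snd_ix _ _ d_s).
split.
  case=> [lt_cd|[eq_cd lt_cd]]; first by left; apply: (rank_lt_reflect lt1_order fst_cs fst_ds).
  by right; split; [apply: rank1_inj | apply: (rank_lt_reflect lt2_order snd_cs snd_ds)].
case=> [lt_cd|[eq_cd lt_cd]]; first by left; apply: rank1_lt.
by right; split; [exact: (congr1 rank1 eq_cd) | apply: (rank_lt lt2_order)].
Qed.

End RankEmbedding.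
Arguments rank1 {X} s i.
Arguments rank_emb {X} s c.
Arguments rank1_lt {X} lt1_order s.
Arguments rank1_inj {X} lt1_order s.
Arguments rank1_pred {X} lt1_order s.
Arguments rank_emb_lex {X} lt1_order lt2_order s.

Section FromCstar.
Variables (L : lang) (X : index_data).
Hypotheses (lt1_order : strict_total_order (@lt1 X))
  (lt2_order : strict_total_order (@lt2 X)).

Lemma consistent_from_Cstar (Gamma : form L void -> Prop) :
  consistent_with_Sigmas Cstar_data Gamma -> consistent_with_Sigmas X Gamma.
Proof.
move=> [M [cI [Gamma_M [skM [linM [Hii [Hiii [Hiv H1iv]]]]]]]].
have [U [UU cone_U]] := ultrafilter_cones (cst X).
have in_cone (F0 s : seq (cst X)) :
    List.incl F0 s -> List.Forall (fun c => List.In c s) F0.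
  by move/List.incl_Forall_in_iff.
pose lex s := rank_emb_lex lt1_order lt2_order s.
pose fst_emb s (c : cst X) (_ : List.In c s) :
  fst_ix (rank_emb s c) = rank1 s (fst_ix c) := erefl.
pose lt_emb s := rank1_lt lt1_order s.
exists (ultrapower M U), (fun c => ucls (fun s => cI (rank_emb s c))).
split; first by move=> phi /Gamma_M; apply: ultrapower_models.
split; first exact: ultrapower_skolem.
split; first exact: ultrapower_linear.
split; [|split; [|split]].
- move=> c d; rewrite ltM_ucls.
  have lt_iff s : List.incl [:: c; d] s ->
      ltM M (cI (rank_emb s c)) (cI (rank_emb s d)) <-> lexlt c d.
    case/in_cone/List.Forall_cons_iff=> c_s /List.Forall_cons_iff [d_s _].
    exact: (sigma_ii_map (lex s) Hii c d c_s d_s).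
  split=> [/(filterI (cone_U [:: c; d]))/filter_ex [s [/lt_iff ->]] //|lt_cd].
  by apply: filterS (cone_U [:: c; d]) => s /lt_iff ->.
- move=> tau cs c adm lt_c; rewrite tval_ucls ltM_ucls.
  apply: filterS (cone_U (c :: cs)) => s /in_cone D_s.
  exact: (sigma_iii_map (lex s) (fst_emb s) (lt_emb s) Hiii).
- move=> tau pre post post' p d adm le_pre lt_dp fst_post' inc'.
  rewrite !tval_ucls ltM_ucls => lt_d; apply/ucls_eq.
  apply: (filterS2 _ _ lt_d (cone_U (d :: pre ++ p :: post ++ post'))).
  move=> s lt_s /in_cone D_s.
  exact: (sigma_iv_map (lex s) (fst_emb s) (lt_emb s) Hiv _ _ _ _ _ d).
- move=> tau pre post post' p d u adm fst_post ne_pre pred_dp nonmin_d le_pu size'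
    fst_post' inc'.
  rewrite !tval_ucls ltM_ucls => lt_d; apply/ucls_eq.
  apply: (filterS2 _ _ lt_d (cone_U (d :: pre ++ p :: post ++ post'))).
  move=> s lt_s /in_cone D_s.
  apply: (sigma1_iv_map (lex s) (fst_emb s) (lt_emb s) (rank1_inj lt1_order s)
    (rank1_pred lt1_order s) _ H1iv _ _ _ _ _ d u) => // c _ _; by exists 0%N.
Qed.

End FromCstar.
Arguments consistent_from_Cstar {L} X lt1_order lt2_order {Gamma}.

Section OmegaEmbedding.
Variables (L : lang) (X : index_data) (a : nat -> ix1 X) (b : nat -> ix2 X).
Hypotheses (lt1_order : strict_total_order (@lt1 X))
  (lt2_order : strict_total_order (@lt2 X))
  (a_succ : forall n, pred_ix (a n) (a n.+1))
  (b_mono : forall n m, (n < m)%N -> lt2 (b n) (b m))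
  (ok_ab : forall n m, okix (a n) (b m)).

Definition omega_emb (c : cst Cstar_data) : cst X :=
  exist _ (a (fst_ix c), b (snd_ix c)) (ok_ab _ _).

Lemma a_mono n m : (n < m)%N -> lt1 (a n) (a m).
Proof. by apply: (chain_lt lt1_order) => k; case: (a_succ k). Qed.

Lemma omega_emb_lex c d : lexlt (omega_emb c) (omega_emb d) <-> lexlt c d.
Proof.
rewrite /lexlt /=; split.
  case=> [/(strict_mono_lt lt1_order a_mono)|[/(strict_mono_inj lt1_order a_mono) eq_cd]];
    first by left.
  by move/(strict_mono_lt lt2_order b_mono); right.
by case=> [/a_mono|[eq_cd /b_mono]]; [left | right; split; first exact: (congr1 a eq_cd)].
Qed.

Lemma a_pred n m : pred_ix (X := Cstar_data) n m -> pred_ix (a n) (a m).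
Proof. by move/pred_ix_Cstar ->. Qed.

Lemma consistent_to_Cstar (Gamma : form L void -> Prop) :
  consistent_with_Sigmas X Gamma -> consistent_with_Sigmas Cstar_data Gamma.
Proof.
move=> [M [cI [Gamma_M [skM [linM [Hii [Hiii [Hiv H1iv]]]]]]]].
have lex (c d : cst Cstar_data) (_ _ : True) := omega_emb_lex c d.
have fst_emb (c : cst Cstar_data) (_ : True) : fst_ix (omega_emb c) = a (fst_ix c).
  by [].
have lt_emb (c d : cst Cstar_data) (_ _ : True) := @a_mono (fst_ix c) (fst_ix d).
have inj_emb (c d : cst Cstar_data) (_ _ : True) :=
  strict_mono_inj lt1_order a_mono (fst_ix c) (fst_ix d).
have pred_emb (c d : cst Cstar_data) (_ _ : True) := @a_pred (fst_ix c) (fst_ix d).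
have nonmin_emb (c : cst Cstar_data) (_ : True) :
    (exists n, (n < fst_ix c)%N) -> exists i, lt1 i (a (fst_ix c)).
  by case=> n /(leq_ltn_trans (leq0n n)) /a_mono; exists (a 0).
have all_true (l : seq (cst Cstar_data)) : List.Forall (fun=> True) l.
  by apply/List.Forall_forall.
exists M, (fun c => cI (omega_emb c)); do 3 split=> //.
split; [|split; [|split]].
- by move=> c d; apply: (sigma_ii_map lex Hii).
- by move=> tau cs c; apply: (sigma_iii_map lex fst_emb lt_emb Hiii _ _ _ (all_true _)).
- move=> tau pre post post' p d.
  exact: (sigma_iv_map lex fst_emb lt_emb Hiv _ _ _ _ _ _ (all_true _)).
- move=> tau pre post post' p d u.
  exact: (sigma1_iv_map lex fst_emb lt_emb inj_emb pred_emb nonmin_emb H1iv _ _ _ _ _ _ _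
    (all_true _)).
Qed.

End OmegaEmbedding.
Arguments consistent_to_Cstar {L} X {a b} lt1_order lt2_order a_succ b_mono ok_ab {Gamma}.

Section SingularChain.
Variables (Lam : Type) (ltL : Lam -> Lam -> Prop)
  (I : Type) (ltI : I -> I -> Prop) (mu : I -> Lam).
Hypothesis setup : singular_setup ltL ltI mu.

Lemma ltI_succ i : exists j, pred_ix (X := C_data ltL ltI mu) i j.
Proof.
case: setup => /wellorder_total [L_irr L_trans _] _ _ I_wo [mu_mono _ mu_cof _ _].
have [_ _ I_total] := wellorder_total I_wo.
have [j lt_ij] : exists j, ltI i j.
  have [j lt_mu] := mu_cof (mu i); exists j.
  case: (I_total i j) => [eq_ij|[//|lt_ji]].
    by move: lt_mu; rewrite eq_ij => /L_irr.
  by case: (L_irr _ (L_trans _ _ _ lt_mu (mu_mono _ _ lt_ji))).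
have [k [lt_ik min_k]] := well_founded_minimal I_wo.2.2.2 (ltI i) (ex_intro _ j lt_ij).
by exists k; split=> // l [lt_il lt_lk]; apply: (min_k l lt_il lt_lk).
Qed.

Lemma omega_chain_in_C : exists (a : nat -> I) (b : nat -> Lam),
  [/\ forall n, pred_ix (X := C_data ltL ltI mu) (a n) (a n.+1),
      forall n m, (n < m)%N -> ltL (b n) (b m) &
      forall n m, ltL (b m) (mu (a n))].
Proof.
case: setup => L_wo _ _ I_wo [mu_mono _ mu_cof _ [x [g [g_lt_x g_mono]]]].
have [_ L_trans _] := wellorder_total L_wo.
have [succ succ_spec] := choice ltI_succ.
have [i0 x_lt_mu] := mu_cof x.
pose a n := iter n succ i0.
have a_mono : forall n m, (n < m)%N -> ltI (a n) (a m).
  by apply: (chain_lt (wellorder_total I_wo)) => n; case: (succ_spec (a n)).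
exists a, (fun n => g (a n)); split=> [n|n m /a_mono /g_mono //|n m].
  exact: succ_spec.
apply: (L_trans _ x); first exact: g_lt_x.
case: n => [|n]; first exact: x_lt_mu.
exact: L_trans _ _ _ x_lt_mu (mu_mono _ _ (a_mono 0 n.+1 (ltn0Sn n))).
Qed.

End SingularChain.
Arguments omega_chain_in_C {Lam ltL I ltI mu} setup.

Theorem lemma4p2 (L : lang) (Lam : Type) (ltL : Lam -> Lam -> Prop)
    (I : Type) (ltI : I -> I -> Prop) (mu : I -> Lam)
    (Gamma : form L void -> Prop) :
  singular_setup ltL ltI mu ->
  (forall phi, Gamma phi -> LS_sentence phi) ->
  (consistent_with_Sigmas (C_data ltL ltI mu) Gamma <->
   consistent_with_Sigmas Cstar_data Gamma).
Proof.
(* No restriction on Gamma is needed: Los's theorem holds for every formula. *)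
move=> setup _.
have [L_wo _ _ I_wo _] := setup.
have [a [b [a_succ b_mono ok_ab]]] := omega_chain_in_C setup.
have [I_order L_order] := (wellorder_total I_wo, wellorder_total L_wo).
split.
  exact: (consistent_to_Cstar (C_data ltL ltI mu) I_order L_order a_succ b_mono ok_ab).
exact: (consistent_from_Cstar (C_data ltL ltI mu) I_order L_order).
Qed.
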